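(* Let $G$ be a finite, simple, connected, non-trivial graph with weak total metric dimension $m=\dim_{wt}(G)$ and diameter $D=\mathrm{diam}(G)$. Then: (1) $|V(G)|\le D^m+m$; (2) the maximum degree of $G$ satisfies $\Delta(G)\le 3^m-1$; (3) $G$ has a proper vertex coloring with at most $2^m$ colors.
   Context: All graphs are finite, simple, connected and non-trivial; $d(x,y)$ is the shortest-path distance. A vertex $x$ resolves two vertices $y,z$ if $d(y,x)\ne d(z,x)$. A set $W\subseteq V(G)$ is a resolving set if every two distinct vertices of $G$ are resolved by some element of $W$. A set $W$ is a weak total resolving set (WTR-set) if $W$ is a resolving set and, for every $w\in W$ and every $x\in V(G)\setminus W$, there is $w'\in W\setminus\{w\}$ with $d(x,w')\ne d(w,w')$. The weak total metric dimension $\dim_{wt}(G)$ is the minimum cardinality of a WTR-set for $G$. *)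

(* A simple graph is a symmetric irreflexive relation e on a finType T. *)
From mathcomp Require Import all_boot.
Set Implicit Arguments. Unset Strict Implicit. Unset Printing Implicit Defensive.

Section Graph.
Variables (T : finType) (e : rel T).

Definition walk_of_length (x y : T) (n : nat) : bool :=
  [exists p : n.-tuple T, path e x p && (last x p == y)].

(* shortest-path distance: least n < #|T| with a walk of length n
   (equals #|T| if y is unreachable from x, which never happens in a connected graph) *)
Definition dist (x y : T) : nat := find (walk_of_length x y) (iota 0 #|T|).

Definition resolves (x y z : T) : bool := dist y x != dist z x.

Definition resolving_set (W : {set T}) : bool :=
  [forall y, forall z, (y != z) ==> [exists w in W, resolves w y z]].

Definition wtr_set (W : {set T}) : bool :=
  resolving_set W &&
  [forall w in W, forall x in ~: W,
     [exists w' in W :\ w, dist x w' != dist w w']].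

(* minimum cardinality of a WTR-set (the whole vertex set is always one) *)
Definition dim_wt : nat := \big[minn/#|T|]_(W : {set T} | wtr_set W) #|W|.

Definition diam : nat := \max_(x : T) \max_(y : T) dist x y.

Definition degree (x : T) : nat := #|[set y | e x y]|.
Definition max_degree : nat := \max_(x : T) degree x.

Definition proper_coloring (k : nat) (c : T -> 'I_k) : Prop :=
  forall x y, e x y -> c x != c y.

Definition connected_graph : Prop := forall x y, connect e x y.
End Graph.

(* All three bounds hold for any resolving set W with m = |W| elements, in
   particular for a minimum WTR-set: the vector of distances to W determines a
   vertex, so each bound follows by injecting a set of vertices into a set of
   m-tuples.  Outside W every distance lies in 1..D, which gives (1).  Along an
   edge distances change by at most one, so the closed neighbourhood of v is
   encoded by the differences d(y,w) - d(v,w) + 1 in {0,1,2}, which gives (2);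
   and two adjacent vertices with the same distance parities would have equal
   distance vectors, so the parity vector is a proper 2^m-colouring, (3). *)
From mathcomp Require Import all_boot.
From mathcomp Require Import zify.
Set Implicit Arguments. Unset Strict Implicit. Unset Printing Implicit Defensive.

Lemma eq_near_odd a b : a <= b.+1 -> b <= a.+1 -> odd a = odd b -> a = b.
Proof.
move=> le_ab le_ba; case: (ltngtP a b) => // [lt_ab|lt_ba].
  have -> : b = a.+1 by lia.
  by rewrite oddS; case: (odd a).
have -> : a = b.+1 by lia.
by rewrite oddS; case: (odd b).
Qed.

Section Distance.
Variables (T : finType) (e : rel T).

Lemma walk_of_length0 x y : walk_of_length e x y 0 = (x == y).
Proof.
apply/existsP/idP => [[p /andP[_]]|/eqP->]; first by rewrite (tuple0 p).
by exists [tuple]; rewrite /= eqxx.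
Qed.

Lemma walk_of_lengthS x y z n :
  e x y -> walk_of_length e y z n -> walk_of_length e x z n.+1.
Proof.
move=> exy /existsP[p /andP[ep lastp]]; apply/existsP; exists (cons_tuple y p).
by rewrite /= exy ep.
Qed.

Lemma dist_min x y n : walk_of_length e x y n -> n < #|T| -> dist e x y <= n.
Proof.
move=> wn lt_nT; rewrite leqNgt; apply/negP => /(before_find 0).
by rewrite nth_iota // wn.
Qed.

Lemma dist_le_diam x y : dist e x y <= diam e.
Proof.
apply: leq_trans (leq_bigmax x).
exact: (leq_bigmax (F := fun y => dist e x y)).
Qed.

Hypothesis e_conn : connected_graph e.

(* A shortest path is duplicate-free, hence has fewer than #|T| edges. *)
Lemma dist_walk x y : walk_of_length e x y (dist e x y) && (dist e x y < #|T|).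
Proof.
have [p ep ->] := connectP (e_conn x y).
case: (shortenP ep) => q eq_q uniq_q _.
have lt_qT : size q < #|T|.
  by have := max_card (mem (x :: q)); rewrite (card_uniqP uniq_q).
have has_walk : has (walk_of_length e x (last x q)) (iota 0 #|T|).
  apply/hasP; exists (size q); first by rewrite mem_iota.
  by apply/existsP; exists (in_tuple q); rewrite eq_q eqxx.
have := nth_find 0 has_walk; move: has_walk; rewrite has_find size_iota /dist.
by move=> lt_dT; rewrite nth_iota // add0n lt_dT andbT.
Qed.

Lemma dist_lt_card x y : dist e x y < #|T|.
Proof. by case/andP: (dist_walk x y). Qed.

Lemma dist_eq0 x y : (dist e x y == 0) = (x == y).
Proof.
apply/eqP/eqP => [d0|->].
  by have /andP[] := dist_walk x y; rewrite d0 walk_of_length0 => /eqP.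
apply/eqP; rewrite -leqn0; apply: dist_min; first by rewrite walk_of_length0.
exact: leq_ltn_trans (leq0n _) (dist_lt_card y y).
Qed.

Lemma dist_edge x y w : e x y -> dist e x w <= (dist e y w).+1.
Proof.
move=> exy; case: (ltnP (dist e y w).+1 #|T|) => [lt_dT|le_Td].
  by apply: dist_min lt_dT; apply: walk_of_lengthS exy _; case/andP: (dist_walk y w).
exact: leq_trans (ltnW (dist_lt_card x w)) le_Td.
Qed.

Lemma diam_gt0 : 1 < #|T| -> 0 < diam e.
Proof.
case/card_gt1P => x [y [_ _ neq_xy]]; apply: leq_trans (dist_le_diam x y).
by rewrite lt0n dist_eq0.
Qed.

Lemma wtr_set_dim_wt : exists2 W, wtr_set e W & #|W| = dim_wt e.
Proof.
apply: (big_ind (fun m => exists2 W, wtr_set e W & #|W| = m)).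
- exists setT; last by rewrite cardsT.
  apply/andP; split.
    apply/forallP => y; apply/forallP => z; apply/implyP => neq_yz.
    apply/existsP; exists y; rewrite in_setT /resolves /=.
    by have /eqP -> : dist e y y == 0; rewrite ?dist_eq0 // eq_sym dist_eq0 eq_sym.
  by apply/forallP => w; apply/implyP => _; apply/forallP => x; rewrite in_setC in_setT.
- by move=> a b [A wA <-] [B wB <-]; rewrite /minn; case: ifP => _; [exists A | exists B].
- by move=> W wW; exists W.
Qed.

End Distance.

Section ResolvingSet.
Variables (T : finType) (e : rel T) (W : {set T}).
Hypotheses (e_sym : symmetric e) (e_irr : irreflexive e).
Hypotheses (e_conn : connected_graph e) (W_res : resolving_set e W).

Definition code (U : Type) (c : T -> T -> U) (x : T) : {ffun 'I_#|W| -> U} :=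
  [ffun i => c x (enum_val i)].

Lemma resolving_setP y z : {in W, forall w, dist e y w = dist e z w} -> y = z.
Proof.
move: W_res => /forallP /(_ y) /forallP /(_ z) /implyP res_yz dist_yz.
apply/eqP/negPn/negP => /res_yz /existsP [w /andP[wW]].
by rewrite /resolves dist_yz // eqxx.
Qed.

Lemma code_inj (U : Type) (c : T -> T -> U) x y :
  {in W, forall w, c x w = c y w -> dist e x w = dist e y w} ->
  code c x = code c y -> x = y.
Proof.
move=> c_dist /ffunP code_xy; apply: resolving_setP => w wW; apply: c_dist => //.
by have := code_xy (enum_rank_in wW w); rewrite !ffunE enum_rankK_in.
Qed.

Lemma card_code (U : finType) (c : T -> T -> U) (S : {set T}) :
  {in S &, forall x y, {in W, forall w, c x w = c y w -> dist e x w = dist e y w}} ->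
  #|S| <= #|U| ^ #|W|.
Proof.
move=> c_dist; rewrite -(card_in_imset (f := code c)) => [|x y xS yS].
  by apply: leq_trans (max_card _) _; rewrite card_ffun card_ord.
exact/code_inj/c_dist.
Qed.

Lemma dist_adj x y w : e x y -> dist e x w <= (dist e y w).+1 /\ dist e y w <= (dist e x w).+1.
Proof. by move=> exy; split; apply: dist_edge => //; rewrite e_sym. Qed.

Lemma card_resolving_set : 1 < #|T| -> #|T| <= diam e ^ #|W| + #|W|.
Proof.
move=> T_gt1; rewrite -(cardsC W) addnC leq_add2r.
have /prednK <- := diam_gt0 e_conn T_gt1.
rewrite -[_.-1.+1]card_ord.
apply: (card_code (c := fun x w => inord (dist e x w).-1)) => x y.
rewrite !in_setC => xW yW w wW /(congr1 val).
have x_w : dist e x w != 0 by rewrite dist_eq0 //; apply: contraNneq xW => ->.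
have y_w : dist e y w != 0 by rewrite dist_eq0 //; apply: contraNneq yW => ->.
have := dist_le_diam e x w; have := dist_le_diam e y w.
by move=> ? ?; rewrite /= !inordK; lia.
Qed.

Lemma max_degree_resolving_set : max_degree e <= 3 ^ #|W| - 1.
Proof.
apply/bigmax_leqP => v _; rewrite /degree.
have closed_nbhd y w : y \in v |: [set y | e v y] ->
    dist e v w <= (dist e y w).+1 /\ dist e y w <= (dist e v w).+1.
  by rewrite in_setU1 inE => /orP[/eqP->|/dist_adj//]; split.
have: #|v |: [set y | e v y]| <= 3 ^ #|W|.
  rewrite -[3]card_ord.
  apply: (card_code (c := fun y w => inord (dist e y w + 1 - dist e v w))).
  move=> x y xN yN w _ /(congr1 val).
  have [v_x x_v] := closed_nbhd x w xN; have [v_y y_v] := closed_nbhd y w yN.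
  by rewrite /= !inordK; lia.
rewrite cardsU1 inE e_irr /=; lia.
Qed.

Lemma coloring_resolving_set : exists c : T -> 'I_(2 ^ #|W|), proper_coloring e c.
Proof.
have card_parity : #|{ffun 'I_#|W| -> bool}| = 2 ^ #|W|.
  by rewrite card_ffun card_bool card_ord.
exists (fun x => cast_ord card_parity (enum_rank (code (fun x w => odd (dist e x w)) x))).
move=> x y exy; apply/negP => /eqP /cast_ord_inj /enum_rank_inj /code_inj eq_xy.
suff xy : x = y by move: exy; rewrite xy e_irr.
apply: eq_xy => w _; have [] := dist_adj w exy; exact: eq_near_odd.
Qed.

End ResolvingSet.

Theorem proposition1 (T : finType) (e : rel T)
  (e_sym : symmetric e) (e_irr : irreflexive e)
  (e_conn : connected_graph e) (nontriv : 1 < #|T|) :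
  [/\ #|T| <= diam e ^ dim_wt e + dim_wt e,
      max_degree e <= 3 ^ dim_wt e - 1
    & exists c : T -> 'I_(2 ^ dim_wt e), proper_coloring e c].
Proof.
have [W /andP[W_res _] <-] := wtr_set_dim_wt e_conn.
split.
- exact: card_resolving_set.
- exact: max_degree_resolving_set.
- exact: coloring_resolving_set.
Qed.
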